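(* Let $A$ be a synaptic algebra and $p,q\in P$. Define $r_p:=p\wedge(p^{\perp}\vee q)\wedge(p^{\perp}\vee q^{\perp})$, $r_{p^{\perp}}:=p^{\perp}\wedge(p\vee q)\wedge(p\vee q^{\perp})$, $r_q:=q\wedge(p\vee q^{\perp})\wedge(p^{\perp}\vee q^{\perp})$, $r_{q^{\perp}}:=q^{\perp}\wedge(p\vee q)\wedge(p^{\perp}\vee q)$, and $[p,q]:=(p\vee q)\wedge(p\vee q^{\perp})\wedge(p^{\perp}\vee q)\wedge(p^{\perp}\vee q^{\perp})$. The following conditions are mutually equivalent: (i) at least one of $r_p=0$, $r_{p^{\perp}}=0$, $r_q=0$, $r_{q^{\perp}}=0$ holds; (ii) $r_p=r_{p^{\perp}}=r_q=r_{q^{\perp}}=0$; (iii) at least one of $pCq$, $pCq^{\perp}$, $p^{\perp}Cq$, $p^{\perp}Cq^{\perp}$ holds; (iv) $pCq$, $pCq^{\perp}$, $p^{\perp}Cq$ and $p^{\perp}Cq^{\perp}$ all hold; (v) $[p,q]=0$.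
   Context: Synaptic algebra (Foulis): $R$ is a real linear associative algebra with unit $1$, and $A\subseteq R$ is a real linear subspace with $1\in A$. For $a,b\in A$ write $aCb$ iff $ab=ba$; $C(a):=\{b\in A: aCb\}$; $CC(a):=\{b\in A: bCd \text{ for all } d\in C(a)\}$. $A$ is a synaptic algebra with enveloping algebra $R$ iff: (SA1) $A$ is a partially ordered archimedean real linear space with positive cone $A^+$, $1$ is an order unit, $\|\cdot\|$ the order-unit norm; (SA2) $a\in A\Rightarrow a^2\in A^+$; (SA3) $a,b\in A^+\Rightarrow aba\in A^+$; (SA4) if $a\in A$, $b\in A^+$, $aba=0$ then $ab=ba=0$; (SA5) if $a\in A^+$ there is $b\in A^+\cap CC(a)$ with $b^2=a$; (SA6) for $a\in A$ there is $p=p^2\in A$ with $ab=0\Leftrightarrow pb=0$ for all $b\in A$; (SA7) if $1\le a$ there is $b\in A$ with $ab=ba=1$; (SA8) if $a,b\in A$, $a_1\le a_2\le\cdots$ are pairwise commuting elements of $C(b)$ with $\|a-a_n\|\to0$, then $a\in C(b)$. $A$ is nondegenerate. $P:=\{p\in A:p=p^2\}$ with the order inherited from $A$ is an orthomodular lattice with orthocomplement $p^{\perp}:=1-p$, meet $\wedge$, join $\vee$. *)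

From HB Require Import structures.
From mathcomp Require Import all_boot all_order all_algebra.
From mathcomp Require Import all_classical all_reals all_analysis.
Set Implicit Arguments. Unset Strict Implicit. Unset Printing Implicit Defensive.
Import Order.TTheory GRing.Theory Num.Theory.
Import numFieldNormedType.Exports.
Local Open Scope classical_set_scope.
Local Open Scope ring_scope.

Section Synaptic.
Variables (R : realType) (E : algType R).
(* A : the synaptic algebra (a subset of the enveloping algebra E);
   Apos : its positive cone A^+. *)
Variables (A Apos : set E).

Definition sle (a b : E) : Prop := Apos (b - a).

Definition commutes (a b : E) : Prop := a * b = b * a.

Definition Cset (a : E) : set E := [set b | A b /\ commutes a b].
Definition CCset (a : E) : set E :=
  [set b | A b /\ forall d, Cset a d -> commutes b d].

Definition ounorm (a : E) : R :=
  inf [set l : R | 0 < l /\ sle (- (l *: 1)) a /\ sle a (l *: 1)].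

Record synaptic_algebra : Prop := {
  sa_sub0 : A 0;
  sa_subD : forall a b, A a -> A b -> A (a + b);
  sa_subZ : forall (k : R) a, A a -> A (k *: a);
  sa_sub1 : A 1;
  sa_pos_sub : forall a, Apos a -> A a;
  sa_pos0 : Apos 0;
  sa_posD : forall a b, Apos a -> Apos b -> Apos (a + b);
  sa_posZ : forall (k : R) a, 0 <= k -> Apos a -> Apos (k *: a);
  sa_pos_anti : forall a, Apos a -> Apos (- a) -> a = 0;
  sa_archi : forall a b, A a -> A b ->
      (forall n : nat, sle (n%:R *: a) b) -> sle a 0;
  sa_unit : forall a, A a -> exists n : nat, sle a (n%:R *: 1);
  sa2 : forall a, A a -> Apos (a * a);
  sa3 : forall a b, Apos a -> Apos b -> Apos (a * b * a);
  sa4 : forall a b, A a -> Apos b -> a * b * a = 0 -> a * b = 0 /\ b * a = 0;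
  sa5 : forall a, Apos a -> exists b, Apos b /\ CCset a b /\ b * b = a;
  sa6 : forall a, A a -> exists p, A p /\ p * p = p /\
      forall b, A b -> (a * b = 0 <-> p * b = 0);
  sa7 : forall a, A a -> sle 1 a -> exists b, A b /\ a * b = 1 /\ b * a = 1;
  sa8 : forall a b (s : nat -> E), A a -> A b ->
      (forall n, Cset b (s n)) ->
      (forall n, sle (s n) (s n.+1)) ->
      (forall m n, commutes (s m) (s n)) ->
      (ounorm (a - s n)) @[n --> \oo] --> (0 : R) ->
      Cset b a;
  sa_nondeg : (1 : E) != 0
}.

Definition is_proj (p : E) : Prop := A p /\ p = p * p.

Definition pcompl (p : E) : E := 1 - p.

Definition is_pmeet (p q r : E) : Prop :=
  is_proj r /\ sle r p /\ sle r q /\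
  forall s, is_proj s -> sle s p -> sle s q -> sle s r.
Definition is_pjoin (p q r : E) : Prop :=
  is_proj r /\ sle p r /\ sle q r /\
  forall s, is_proj s -> sle p s -> sle q s -> sle r s.

Definition pmeet (p q : E) : E := xget 0 (is_pmeet p q).
Definition pjoin (p q : E) : E := xget 0 (is_pjoin p q).

End Synaptic.

From HB Require Import structures.
From mathcomp Require Import all_boot all_order all_algebra.
From mathcomp Require Import all_classical all_reals all_analysis.
Import Order.TTheory GRing.Theory Num.Theory.
Local Open Scope ring_scope.
Set Implicit Arguments. Unset Strict Implicit.

(* Projections satisfy [e <= f] iff [e f = e]. The join of [p] and [q] is the
   carrier projection of [p + q] given by SA6, meets follow by De Morgan, and
   commuting projections [e], [f] have meet [e f]. Since [p ∧ q] and
   [p ∧ q^⊥] are orthogonal subprojections of [p], one computes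
   [r_p = p - p ∧ q^⊥ - p ∧ q], which vanishes iff [p] is their sum, i.e.
   iff [p C q]. As [r_p <= [p, q]], [[p, q] = 0] forces [p C q]. Conversely,
   if [p C q], then [[p, q] <= 1 - a b] for the four products [a b] with
   [a] in [{p, p^⊥}] and [b] in [{q, q^⊥}]; these sum to [1] and each one
   annihilates [[p, q]], so [[p, q] = 0]. The other [r]'s are [r_p] with [p]
   and [q] swapped or complemented, and [C] is invariant under complements. *)

Section ComplementAlgebra.
Variable R : pzRingType.
Implicit Types x y : R.

Lemma subrBB x y z : (x - y) - (x - z) = z - y.
Proof. by rewrite opprB addrC addrA subrK addrC. Qed.

Lemma mulr_compl_eq0 x y : x * (1 - y) = 0 <-> x * y = x.
Proof.
rewrite mulrBr mulr1; split; first by move/subr0_eq.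
by move->; rewrite subrr.
Qed.

Lemma mull_compl_eq0 x y : (1 - y) * x = 0 <-> y * x = x.
Proof.
rewrite mulrBl mul1r; split; first by move/subr0_eq.
by move->; rewrite subrr.
Qed.

Lemma mulr_compl_id x y : x * (1 - y) = x <-> x * y = 0.
Proof. by rewrite -{2}(subKr 1 y); exact: iff_sym (mulr_compl_eq0 _ _). Qed.

Lemma mull_compl_id x y : (1 - y) * x = x <-> y * x = 0.
Proof. by rewrite -{2}(subKr 1 y); exact: iff_sym (mull_compl_eq0 _ _). Qed.

Lemma mulr_complK x y : x * (1 - y) + x * y = x.
Proof. by rewrite -mulrDr subrK mulr1. Qed.

End ComplementAlgebra.

Section Commutes.
Variables (R : realType) (E : algType R).
Implicit Types x y : E.

Lemma commutes_sym x y : commutes x y <-> commutes y x.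
Proof. by rewrite /commutes; split=> ->. Qed.

Lemma commutes_complr x y : commutes x (1 - y) <-> commutes x y.
Proof.
rewrite /commutes mulrBl mulrBr mul1r mulr1.
by split=> [/subrI | ->].
Qed.

Lemma commutes_compll x y : commutes (1 - x) y <-> commutes x y.
Proof. by rewrite commutes_sym commutes_complr commutes_sym. Qed.

End Commutes.

Section Synaptic.
Variables (R : realType) (E : algType R) (A Apos : set E).
Hypothesis HS : synaptic_algebra A Apos.

Local Notation proj := (is_proj A).
Local Notation le := (sle Apos).
Local Notation meet := (pmeet A Apos).
Local Notation join := (pjoin A Apos).

Lemma memA_sub a b : A a -> A b -> A (a - b).
Proof.
move=> Aa Ab; apply: (sa_subD HS) => //.
by rewrite -scaleN1r; apply: (sa_subZ HS).
Qed.

Lemma sle_trans a b c : le a b -> le b c -> le a c.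
Proof.
rewrite /sle => ab bc; rewrite -(subrKA b c); exact: (sa_posD HS).
Qed.

Lemma sle_anti a b : le a b -> le b a -> a = b.
Proof.
rewrite /sle => ab ba; apply/esym/subr0_eq/(sa_pos_anti HS) => //.
by rewrite opprB.
Qed.

Lemma sle_compl a b : le (1 - b) (1 - a) <-> le a b.
Proof. by rewrite /sle subrBB. Qed.

Lemma sle_complL a b : le (1 - a) b <-> le (1 - b) a.
Proof. by rewrite /sle !opprB addrCA. Qed.

Lemma sle_complR a b : le a (1 - b) <-> le b (1 - a).
Proof. by rewrite /sle addrAC. Qed.

Lemma pos_addr_eq0 x y : Apos x -> Apos y -> x + y = 0 -> x = 0.
Proof.
move=> Px Py xy0; apply: (sa_pos_anti HS) => //.
by rewrite -[- x]addr0 -xy0 addKr.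
Qed.

Lemma proj_mem p : proj p -> A p.
Proof. by case. Qed.

Lemma proj_idem p : proj p -> p * p = p.
Proof. by case=> _ <-. Qed.

Lemma proj_pos p : proj p -> Apos p.
Proof. by case=> Ap ->; apply: (sa2 HS). Qed.

Lemma proj_compl p : proj p -> proj (1 - p).
Proof.
move=> Pp; split; first exact: memA_sub (sa_sub1 HS) (proj_mem Pp).
by rewrite mulrBl !mulrBr !mul1r mulr1 proj_idem // subrr subr0.
Qed.

Lemma proj_sle0 e : proj e -> le e 0 -> e = 0.
Proof.
by move=> Pe; rewrite /sle sub0r; apply: (sa_pos_anti HS) (proj_pos Pe).
Qed.

(* With [g = 1 - f], [g (f - e) g = - g e g] is both positive and negative,
   so SA4 yields [g e = e g = 0]. *)
Lemma proj_sle_mul e f : proj e -> proj f -> le e f -> e * f = e /\ f * e = e.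
Proof.
move=> Pe Pf ef; set g := 1 - f.
have Pg : proj g by apply: proj_compl.
have gf0 : g * f = 0 by rewrite mulrBl mul1r proj_idem // subrr.
have gegN : g * (f - e) * g = - (g * e * g).
  by rewrite [g * (f - e)]mulrBr gf0 sub0r mulNr.
have geg0 : g * e * g = 0.
  apply: (sa_pos_anti HS); first by apply: (sa3 HS); apply: proj_pos.
  by rewrite -gegN; apply: (sa3 HS) => //; apply: proj_pos.
by case: (sa4 HS (proj_mem Pg) (proj_pos Pe) geg0)
  => /mull_compl_eq0 fe /mulr_compl_eq0 ef'.
Qed.

Lemma mul_proj_sle e f : proj e -> proj f -> e * f = e -> le e f.
Proof.
move=> Pe Pf ef; have Pg := proj_compl Pf.
(* SA4 turns [e (1 - f) = 0] into [(1 - f) e = 0], so [f - e] is idempotent. *)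
have eg0 : e * (1 - f) = 0 by apply/mulr_compl_eq0.
have [_ /mull_compl_eq0 fe] :
    e * (1 - f) = 0 /\ (1 - f) * e = 0.
  by apply: (sa4 HS (proj_mem Pe) (proj_pos Pg)); rewrite eg0 mul0r.
rewrite /sle; have -> : f - e = (f - e) * (f - e).
  by rewrite mulrBl !mulrBr !proj_idem // ef fe subrr subr0.
by apply: (sa2 HS); apply: memA_sub; apply: proj_mem.
Qed.

Lemma proj_sle_compl e f : proj e -> proj f -> le e (1 - f) ->
  e * f = 0 /\ f * e = 0.
Proof.
move=> Pe Pf /(proj_sle_mul Pe (proj_compl Pf)) [ef fe].
by split; [apply/mulr_compl_id | apply/mull_compl_id].
Qed.

Lemma join_exists p q : proj p -> proj q -> exists r, is_pjoin A Apos p q r.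
Proof.
move=> Pp Pq.
have [r [Ar [rr carrier]]] := sa6 HS (sa_subD HS (proj_mem Pp) (proj_mem Pq)).
have Pr : proj r by split; rewrite ?rr.
have Pg := proj_compl Pr; set g := 1 - r in Pg *.
have annih s : proj s -> (p + q) * (1 - s) = 0 -> le r s.
  move=> Ps /(carrier _ (proj_mem (proj_compl Ps))) rs.
  by apply: mul_proj_sle => //; apply/mulr_compl_eq0.
have below s : proj s -> g * s * g = 0 -> le s r.
  move=> Ps /(sa4 HS (proj_mem Pg) (proj_pos Ps)) [_ sg].
  by apply: mul_proj_sle => //; apply/mulr_compl_eq0.
have gpqg : g * p * g + g * q * g = 0.
  have : (p + q) * g = 0.
    by apply/(carrier _ (proj_mem Pg))/mulr_compl_eq0/proj_idem.
  by rewrite -mulrDl -mulrDr -mulrA => ->; rewrite mulr0.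
have gpg : Apos (g * p * g) by apply: (sa3 HS); apply: proj_pos.
have gqg : Apos (g * q * g) by apply: (sa3 HS); apply: proj_pos.
exists r; split=> //; split; first exact/below/(pos_addr_eq0 gpg gqg).
split; first by apply/below/(pos_addr_eq0 gqg gpg) => //; rewrite addrC.
move=> s Ps ps qs; apply: annih => //.
have [ps' _] := proj_sle_mul Pp Ps ps; have [qs' _] := proj_sle_mul Pq Ps qs.
by rewrite mulrDl !(proj2 (mulr_compl_eq0 _ _)) ?addr0.
Qed.

Lemma join_spec p q : proj p -> proj q -> is_pjoin A Apos p q (join p q).
Proof. by move=> Pp Pq; apply: xgetPex; apply: join_exists. Qed.

Lemma meet_exists p q : proj p -> proj q -> exists r, is_pmeet A Apos p q r.
Proof.
move=> Pp Pq.
have [Pj [pj [qj jmin]]] := join_spec (proj_compl Pp) (proj_compl Pq).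
exists (1 - join (1 - p) (1 - q)); split; first exact: proj_compl.
do 2!(split; first exact/sle_complL).
move=> s Ps sp sq; apply/sle_complR.
by apply: jmin; [apply: proj_compl | apply/sle_compl.. ].
Qed.

Lemma meet_spec p q : proj p -> proj q -> is_pmeet A Apos p q (meet p q).
Proof. by move=> Pp Pq; apply: xgetPex; apply: meet_exists. Qed.

Lemma meet_unique p q r : is_pmeet A Apos p q r -> meet p q = r.
Proof.
move=> rspec; apply: xget_unique => // s sspec.
case: rspec sspec => [Pr [rp [rq rmax]]] [Ps [sp [sq smax]]].
by apply: sle_anti; [apply: rmax | apply: smax].
Qed.

Lemma join_unique p q r : is_pjoin A Apos p q r -> join p q = r.
Proof.
move=> rspec; apply: xget_unique => // s sspec.
case: rspec sspec => [Pr [pr [qr rmin]]] [Ps [ps [qs smin]]].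
by apply: sle_anti; [apply: smin | apply: rmin].
Qed.

Section Lattice.
Variables p q : E.
Hypotheses (Pp : proj p) (Pq : proj q).

Lemma proj_meet : proj (meet p q). Proof. by case: (meet_spec Pp Pq). Qed.
Lemma proj_join : proj (join p q). Proof. by case: (join_spec Pp Pq). Qed.
Lemma sleIl : le (meet p q) p. Proof. by case: (meet_spec Pp Pq) => _ []. Qed.
Lemma sleIr : le (meet p q) q.
Proof. by case: (meet_spec Pp Pq) => _ [_ []]. Qed.
Lemma sleUl : le p (join p q). Proof. by case: (join_spec Pp Pq) => _ []. Qed.

Lemma slexI s : proj s -> le s p -> le s q -> le s (meet p q).
Proof. by case: (meet_spec Pp Pq) => _ [_ [_]]; apply. Qed.

Lemma joinC : join p q = join q p.
Proof.
apply: join_unique; have [Pj [qj [pj jmin]]] := join_spec Pq Pp.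
by do 3!split => //; move=> s Ps ps qs; apply: jmin.
Qed.

Lemma joinEmeet : join p q = 1 - meet (1 - p) (1 - q).
Proof.
have [Pm [mp [mq mmax]]] := meet_spec (proj_compl Pp) (proj_compl Pq).
apply: join_unique; split; first exact: proj_compl.
do 2!(split; first exact/sle_complR).
move=> s Ps ps qs; apply/sle_complL.
by apply: mmax; [apply: proj_compl | apply/sle_compl.. ].
Qed.

End Lattice.

(* [a b = ((a + b)^2 - a^2 - b^2) / 2] when [a C b], and squares lie in [A]. *)
Lemma memA_mul_comm a b : A a -> A b -> commutes a b -> A (a * b).
Proof.
move=> Aa Ab ab.
have -> : a * b = (2^-1 : R) *: ((a + b) * (a + b) - b * b - a * a).
  rewrite mulrDl !mulrDr -ab addrA -(addrA (a * a)) -mulr2n.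
  rewrite addrK addrAC subrr add0r.
  by rewrite -[a * b *+ 2]scaler_nat scalerA mulVf ?scale1r // pnatr_eq0.
have sqA c : A c -> A (c * c) by move=> Ac; apply/(sa_pos_sub HS)/(sa2 HS).
apply: (sa_subZ HS); apply: memA_sub; [apply: memA_sub|]; apply: sqA => //.
exact: (sa_subD HS).
Qed.

Lemma proj_mul e f : proj e -> proj f -> commutes e f -> proj (e * f).
Proof.
move=> Pe Pf ef; split.
  exact: memA_mul_comm (proj_mem Pe) (proj_mem Pf) ef.
by rewrite -mulrA (mulrA f) -ef -mulrA proj_idem // mulrA proj_idem.
Qed.

Lemma meet_commE e f : proj e -> proj f -> commutes e f -> meet e f = e * f.
Proof.
move=> Pe Pf ef; have Pef := proj_mul Pe Pf ef.
apply: meet_unique; split => //; split.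
  by apply: mul_proj_sle => //; rewrite -mulrA -ef mulrA proj_idem.
split; first by apply: mul_proj_sle => //; rewrite -mulrA proj_idem.
move=> s Ps se sf; apply: mul_proj_sle => //.
have [[se' _] [sf' _]] := (proj_sle_mul Ps Pe se, proj_sle_mul Ps Pf sf).
by rewrite mulrA se' sf'.
Qed.

Lemma join_commE e f : proj e -> proj f -> commutes e f ->
  join e f = 1 - (1 - e) * (1 - f).
Proof.
move=> Pe Pf ef; rewrite joinEmeet // meet_commE //; try exact: proj_compl.
by apply/commutes_compll/commutes_complr.
Qed.

(* [rpart p q] is the paper's [r_p]; [r_p^⊥], [r_q], [r_q^⊥] are
   [rpart (1 - p) q], [rpart q p] and [rpart (1 - q) p]. *)
Definition rpart p q := meet (meet p (join (1 - p) q)) (join (1 - p) (1 - q)).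

Definition commutator p q :=
  meet (meet (meet (join p q) (join p (1 - q))) (join (1 - p) q))
    (join (1 - p) (1 - q)).

Section TwoProjections.
Variables p q : E.
Hypotheses (Pp : proj p) (Pq : proj q).
Let Pp' := proj_compl Pp.
Let Pq' := proj_compl Pq.

Lemma rpartE : rpart p q = p - meet p (1 - q) - meet p q.
Proof.
rewrite /rpart !joinEmeet ?subKr //.
set a := meet p (1 - q); set b := meet p q.
have Pa : proj a by apply: proj_meet.
have Pb : proj b by apply: proj_meet.
have [ap pa] := proj_sle_mul Pa Pp (sleIl Pp Pq').
have [bp pb] := proj_sle_mul Pb Pp (sleIl Pp Pq).
have [aq qa] := proj_sle_compl Pa Pq (sleIr Pp Pq').
have [bq qb] := proj_sle_mul Pb Pq (sleIr Pp Pq).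
have ab : a * b = 0 by rewrite -qb mulrA aq mul0r.
have ba : b * a = 0 by rewrite -bq -mulrA qa mulr0.
have pa' : meet p (1 - a) = p - a.
  rewrite meet_commE //; try exact: proj_compl.
  - by rewrite mulrBr mulr1 pa.
  - by apply/commutes_complr; rewrite /commutes pa ap.
have Ppa : proj (p - a).
  by rewrite -pa'; apply: proj_meet => //; exact: proj_compl.
rewrite pa' meet_commE //; try exact: proj_compl.
- by rewrite mulrBr mulr1 mulrBl pb ab subr0.
- by apply/commutes_complr; rewrite /commutes mulrBl mulrBr pb bp ab ba.
Qed.

Lemma rpart_eq0 : rpart p q = 0 <-> commutes p q.
Proof.
have [aq qa] := proj_sle_compl (proj_meet Pp Pq') Pq (sleIr Pp Pq').
have [bq qb] := proj_sle_mul (proj_meet Pp Pq) Pq (sleIr Pp Pq).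
rewrite rpartE; split=> [/subr0_eq/eqP | pq].
  by rewrite subr_eq => /eqP ->; rewrite /commutes mulrDl mulrDr aq qa bq qb.
rewrite !meet_commE //; try exact/commutes_complr.
by rewrite -addrA -opprD mulr_complK subrr.
Qed.

Lemma rpart_sle_commutator : le (rpart p q) (commutator p q).
Proof.
have [Pj1 Pj2] := (proj_join Pp' Pq, proj_join Pp' Pq').
have [PJ1 PJ2] := (proj_join Pp Pq, proj_join Pp Pq').
have Pm := proj_meet Pp Pj1; have Pr := proj_meet Pm Pj2.
have rm := sleIl Pm Pj2; have rp := sle_trans rm (sleIl Pp Pj1).
have PM := proj_meet PJ1 PJ2.
apply: (slexI (proj_meet PM Pj1) Pj2 Pr); last exact: sleIr Pm Pj2.
apply: (slexI PM Pj1 Pr); last exact: sle_trans rm (sleIr Pp Pj1).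
by apply: (slexI PJ1 PJ2 Pr); apply: sle_trans rp (sleUl _ _).
Qed.

End TwoProjections.

Lemma sle_join_commE x e f : proj x -> proj e -> proj f -> commutes e f ->
  le x (join e f) -> x * (1 - e) * (1 - f) = 0.
Proof.
move=> Px Pe Pf ef /(proj_sle_mul Px (proj_join Pe Pf)) [xj _].
by move/mulr_compl_eq0: xj; rewrite join_commE // subKr mulrA.
Qed.

Lemma commutator_eq0 p q : proj p -> proj q ->
  commutator p q = 0 <-> commutes p q.
Proof.
move=> Pp Pq; have Pp' := proj_compl Pp; have Pq' := proj_compl Pq.
have [PJ1 PJ2] := (proj_join Pp Pq, proj_join Pp Pq').
have [Pj1 Pj2] := (proj_join Pp' Pq, proj_join Pp' Pq').
have PM := proj_meet PJ1 PJ2; have PM' := proj_meet PM Pj1.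
have Px := proj_meet PM' Pj2; set x := commutator p q in Px *.
split=> [x0 | pq].
  apply/(rpart_eq0 Pp Pq)/proj_sle0; first exact: proj_meet (proj_meet _ _) _.
  by rewrite -x0; apply: rpart_sle_commutator.
have xM' := sleIl PM' Pj2; have xM := sle_trans xM' (sleIl PM Pj1).
have pq' := proj2 (commutes_complr _ _) pq.
have p'q := proj2 (commutes_compll _ _) pq.
have p'q' := proj2 (commutes_compll _ _) pq'.
have := sle_join_commE Px Pp Pq pq (sle_trans xM (sleIl PJ1 PJ2)).
have := sle_join_commE Px Pp Pq' pq' (sle_trans xM (sleIr PJ1 PJ2)).
have := sle_join_commE Px Pp' Pq p'q (sle_trans xM' (sleIr PM Pj1)).
have := sle_join_commE Px Pp' Pq' p'q' (sleIr PM' Pj2).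
rewrite !subKr => xpq xpq' xp'q xp'q'.
rewrite -(mulr_complK x p) -(mulr_complK (x * (1 - p)) q).
by rewrite -(mulr_complK (x * p) q) xpq xpq' xp'q xp'q' !addr0.
Qed.

End Synaptic.

Theorem theorem3p3 (R : realType) (E : algType R) (A Apos : set E) :
  synaptic_algebra A Apos ->
  forall p q : E, is_proj A p -> is_proj A q ->
  let meet := pmeet A Apos in
  let join := pjoin A Apos in
  let pp := pcompl p in
  let qq := pcompl q in
  let r_p  := meet (meet p (join pp q)) (join pp qq) in
  let r_pp := meet (meet pp (join p q)) (join p qq) in
  let r_q  := meet (meet q (join p qq)) (join pp qq) in
  let r_qq := meet (meet qq (join p q)) (join pp q) in
  let pq := meet (meet (meet (join p q) (join p qq)) (join pp q)) (join pp qq) in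
  [<-> r_p = 0 \/ r_pp = 0 \/ r_q = 0 \/ r_qq = 0;
       r_p = 0 /\ r_pp = 0 /\ r_q = 0 /\ r_qq = 0;
       commutes p q \/ commutes p qq \/ commutes pp q \/ commutes pp qq;
       commutes p q /\ commutes p qq /\ commutes pp q /\ commutes pp qq;
       pq = 0].
Proof.
move=> HS p q Pp Pq; cbv zeta; rewrite /pcompl.
have [Pp' Pq'] := (proj_compl HS Pp, proj_compl HS Pq).
have r_p := rpart_eq0 HS Pp Pq; rewrite /rpart in r_p.
have r_pp := rpart_eq0 HS Pp' Pq; rewrite /rpart subKr in r_pp.
have r_q := rpart_eq0 HS Pq Pp.
rewrite /rpart (joinC HS Pq' Pp) (joinC HS Pq' Pp') in r_q.
have r_qq := rpart_eq0 HS Pq' Pp.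
rewrite /rpart subKr (joinC HS Pq Pp) (joinC HS Pq Pp') in r_qq.
have pq := commutator_eq0 HS Pp Pq; rewrite /commutator in pq.
have [[[[qp pq'] p'q] q'p] p'q'] := (commutes_sym q p, commutes_complr p q,
  commutes_compll p q, commutes_compll q p, commutes_compll p (1 - q)).
by tfae; tauto.
Qed.
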